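(* With $u_e:\mathbf{k}\to\text{Ш}_e(A)$, $c\mapsto c1_A$, the quintuple $(\text{Ш}_e(A),\diamond,u_e,\Delta_e,\varepsilon_e)$ is a bialgebra.
   Context: $\mathbf{k}$ is a commutative unitary ring, $\lambda,\kappa\in\mathbf{k}$, $\mu$ a root of $t^2-\lambda t+\kappa$. An extended Rota-Baxter operator of weight $(\lambda,\kappa)$ satisfies $P(x)P(y)=P(xP(y))+P(P(x)y)+\lambda P(xy)+\kappa xy$. $A=(A,m_A,\mu_A,\Delta_A,\varepsilon_A)$ is a commutative bialgebra and $(\text{Ш}_e(A),\diamond,P_e,j_A)$ is the free commutative extended Rota-Baxter algebra of weight $(\lambda,\kappa)$ on $A$, with $\text{Ш}_e(A)=\bigoplus_{n\ge1}A^{\otimes n}$, $P_e(\mathfrak{a})=1_A\otimes\mathfrak{a}$, and the recursively defined generalized quasi-shuffle product $\diamond$. $\varepsilon_e:\text{Ш}_e(A)\to\mathbf{k}$ is the unique extended Rota-Baxter algebra homomorphism with $\varepsilon_e\circ j_A=\varepsilon_A$, $\varepsilon_e\circ P_e=-\mu\varepsilon_e$; $\Delta_e:\text{Ш}_e(A)\to\text{Ш}_e(A)\bar\otimes\text{Ш}_e(A)$ is the unique extended Rota-Baxter algebra homomorphism with $\Delta_e\circ j_A=\Delta_A$ and $\Delta_e\circ P_e=\bar P\circ\Delta_e$, where $\bar P(\mathfrak{a}\bar\otimes\mathfrak{b})=P_e(\mathfrak{a})\bar\otimes\varepsilon_e(\mathfrak{b})1_A+\mu\mathfrak{a}\bar\otimes\varepsilon_e(\mathfrak{b})1_A+\mathfrak{a}\bar\otimes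 P_e(\mathfrak{b})$ and $\bar\otimes$ is the tensor product between copies of $\text{Ш}_e(A)$. *)

(* Tensor products of modules over a commutative ring are not
   in MathComp; we build them here (classically) as a quotient of formal sums. *)
From HB Require Import structures.
From mathcomp Require Import all_boot all_order all_algebra.
From mathcomp Require Import boolp.
Set Implicit Arguments. Unset Strict Implicit. Unset Printing Implicit Defensive.
Import Order.TTheory GRing.Theory.
Local Open Scope ring_scope.

Definition lin (k : pzRingType) (U V : lmodType k) (f : U -> V) : Prop :=
  forall c x y, f (c *: x + y) = c *: f x + f y.

Definition slin (k : pzRingType) (U : lmodType k) (f : U -> k) : Prop :=
  forall c x y, f (c *: x + y) = c * f x + f y.

Definition klin (k : pzRingType) (U : lmodType k) (f : k -> U) : Prop :=
  forall c x y, f (c * x + y) = c *: f x + f y.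

Definition bilin (k : pzRingType) (M N P : lmodType k) (f : M -> N -> P) : Prop :=
  (forall c a a' b, f (c *: a + a') b = c *: f a b + f a' b) /\
  (forall c a b b', f a (c *: b + b') = c *: f a b + f a b').

Definition fsum (k : pzRingType) (M N P : lmodType k) (f : M -> N -> P)
  (s : seq (k * (M * N))) : P := \sum_(x <- s) x.1 *: f x.2.1 x.2.2.

(** two formal sums represent the same tensor iff every bilinear map agrees on them *)
Definition tequiv (k : pzRingType) (M N : lmodType k) (s t : seq (k * (M * N))) : Prop :=
  forall (P : lmodType k) (f : M -> N -> P), bilin f -> fsum f s = fsum f t.

Record tensor (k : pzRingType) (M N : lmodType k) := Tensor {
  tset : seq (k * (M * N)) -> Prop;
  tsetP : exists s, tset = tequiv s }.

HB.instance Definition _ (k : pzRingType) (M N : lmodType k) :=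
  gen_eqMixin (tensor M N).
HB.instance Definition _ (k : pzRingType) (M N : lmodType k) :=
  gen_choiceMixin (tensor M N).

Definition tpi (k : pzRingType) (M N : lmodType k) (s : seq (k * (M * N))) : tensor M N :=
  @Tensor k M N (tequiv s) (ex_intro _ s erefl).

Definition trepr (k : pzRingType) (M N : lmodType k) (t : tensor M N) : seq (k * (M * N)) :=
  projT1 (cid (tsetP t)).

Lemma trepr_spec (k : pzRingType) (M N : lmodType k) (t : tensor M N) :
  tset t = tequiv (trepr t).
Proof. by rewrite /trepr; case: cid. Qed.

Lemma tequiv_sym (k : pzRingType) (M N : lmodType k) (s t : seq (k * (M * N))) :
  tequiv s t -> tequiv t s.
Proof. by move=> H P f Hf; rewrite H. Qed.

Lemma tequiv_trans (k : pzRingType) (M N : lmodType k) (s t u : seq (k * (M * N))) :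
  tequiv s t -> tequiv t u -> tequiv s u.
Proof. by move=> H1 H2 P f Hf; rewrite H1 ?H2. Qed.

Lemma tensor_ext (k : pzRingType) (M N : lmodType k) (t u : tensor M N) :
  tset t = tset u -> t = u.
Proof.
case: t u => X HX [Y HY] /= E; subst Y; congr Tensor; exact: Prop_irrelevance.
Qed.

Lemma tpi_eq (k : pzRingType) (M N : lmodType k) (s t : seq (k * (M * N))) :
  tequiv s t -> tpi s = tpi t.
Proof.
move=> H; apply: tensor_ext => /=; apply: funext => u; apply: propext; split.
  by move=> H'; apply: tequiv_trans (tequiv_sym H) H'.
by move=> H'; apply: tequiv_trans H H'.
Qed.

Lemma treprK (k : pzRingType) (M N : lmodType k) (t : tensor M N) : tpi (trepr t) = t.
Proof. by apply: tensor_ext => /=; rewrite trepr_spec. Qed.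

Lemma trepr_tpi (k : pzRingType) (M N : lmodType k) (s : seq (k * (M * N))) :
  tequiv (trepr (tpi s)) s.
Proof.
have E := trepr_spec (tpi s); rewrite /= in E.
have : tequiv s s by [].
by rewrite E.
Qed.

Lemma fsum_trepr (k : pzRingType) (M N P : lmodType k) (f : M -> N -> P)
  (s : seq (k * (M * N))) : bilin f -> fsum f (trepr (tpi s)) = fsum f s.
Proof. by move=> Hf; apply: trepr_tpi. Qed.

Lemma fsum_cat (k : pzRingType) (M N P : lmodType k) (f : M -> N -> P) s t :
  fsum f (s ++ t) = fsum f s + fsum f t.
Proof. by rewrite /fsum big_cat. Qed.

Lemma fsum_nil (k : pzRingType) (M N P : lmodType k) (f : M -> N -> P) :
  fsum f [::] = 0.
Proof. by rewrite /fsum big_nil. Qed.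

Definition sscale (k : pzRingType) (M N : lmodType k) (c : k) (s : seq (k * (M * N))) :=
  map (fun x => (c * x.1, x.2)) s.

Lemma fsum_scale (k : pzRingType) (M N P : lmodType k) (f : M -> N -> P) c s :
  fsum f (sscale c s) = c *: fsum f s.
Proof.
rewrite /fsum /sscale big_map scaler_sumr; apply: eq_bigr => x _.
by rewrite scalerA.
Qed.

Definition tadd (k : pzRingType) (M N : lmodType k) (t u : tensor M N) : tensor M N :=
  tpi (trepr t ++ trepr u).
Definition tscale (k : pzRingType) (M N : lmodType k) (c : k) (t : tensor M N) : tensor M N :=
  tpi (sscale c (trepr t)).
Definition tzero (k : pzRingType) (M N : lmodType k) : tensor M N := tpi [::].
Definition topp (k : pzRingType) (M N : lmodType k) (t : tensor M N) : tensor M N :=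
  tscale (-1) t.

Ltac tsolve := apply: tpi_eq; intros ?P ?f ?Hf;
  match goal with H : bilin _ |- _ =>
  rewrite ?fsum_cat ?fsum_scale ?(@fsum_trepr _ _ _ _ _ _ H) ?fsum_nil; rewrite ?fsum_cat ?fsum_scale ?(@fsum_trepr _ _ _ _ _ _ H) ?fsum_nil; rewrite ?fsum_cat ?fsum_scale ?(@fsum_trepr _ _ _ _ _ _ H) ?fsum_nil end.

Lemma taddA (k : pzRingType) (M N : lmodType k) : associative (@tadd k M N).
Proof. by move=> x y z; rewrite /tadd; tsolve; rewrite addrA. Qed.
Lemma taddC (k : pzRingType) (M N : lmodType k) : commutative (@tadd k M N).
Proof. by move=> x y; rewrite /tadd; tsolve; rewrite addrC. Qed.
Lemma tadd0 (k : pzRingType) (M N : lmodType k) : left_id (@tzero k M N) (@tadd k M N).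
Proof. by move=> x; rewrite /tadd /tzero -[RHS]treprK; tsolve; rewrite add0r. Qed.
Lemma taddN (k : pzRingType) (M N : lmodType k) :
  left_inverse (@tzero k M N) (@topp k M N) (@tadd k M N).
Proof. by move=> x; rewrite /tadd /topp /tscale /tzero; tsolve; rewrite scaleN1r addNr. Qed.

HB.instance Definition _ (k : pzRingType) (M N : lmodType k) :=
  GRing.isZmodule.Build (tensor M N) (@taddA k M N) (@taddC k M N) (@tadd0 k M N) (@taddN k M N).

Lemma tscaleA (k : pzRingType) (M N : lmodType k) a b (v : tensor M N) :
  tscale a (tscale b v) = tscale (a * b) v.
Proof. by rewrite /tscale; tsolve; rewrite scalerA. Qed.
Lemma tscale1 (k : pzRingType) (M N : lmodType k) : left_id 1 (@tscale k M N).
Proof. by move=> x; rewrite /tscale -[RHS]treprK; tsolve; rewrite scale1r. Qed.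
Lemma tscaleDr (k : pzRingType) (M N : lmodType k) :
  right_distributive (@tscale k M N) +%R.
Proof. by move=> a x y; rewrite /tscale /= /tadd; tsolve; rewrite scalerDr. Qed.
Lemma tscaleDl (k : pzRingType) (M N : lmodType k) (v : tensor M N) :
  {morph (fun a => @tscale k M N a v) : a b / a + b}.
Proof. by move=> a b; rewrite /tscale /= /tadd; tsolve; rewrite scalerDl. Qed.

HB.instance Definition _ (k : pzRingType) (M N : lmodType k) :=
  GRing.Zmodule_isLmodule.Build k (tensor M N) (@tscaleA k M N) (@tscale1 k M N)
    (@tscaleDr k M N) (@tscaleDl k M N).

Definition tens (k : pzRingType) (M N : lmodType k) (a : M) (b : N) : tensor M N :=
  tpi [:: (1, (a, b))].

Definition tlift (k : pzRingType) (M N P : lmodType k) (f : M -> N -> P)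
  (t : tensor M N) : P := fsum f (trepr t).

Lemma tlift_tens (k : pzRingType) (M N P : lmodType k) (f : M -> N -> P) a b :
  bilin f -> tlift f (tens a b) = f a b.
Proof. by move=> Hf; rewrite /tlift /tens fsum_trepr // /fsum big_seq1 scale1r. Qed.

Definition tmap (k : pzRingType) (M N M' N' : lmodType k) (f : M -> M') (g : N -> N') :
  tensor M N -> tensor M' N' := tlift (fun a b => tens (f a) (g b)).

Definition tassoc (k : pzRingType) (M N Q : lmodType k) :
  tensor (tensor M N) Q -> tensor M (tensor N Q) :=
  tlift (fun x c => tlift (fun a b => tens a (tens b c)) x).

Definition tmul (k : pzRingType) (H : lmodType k) (m : H -> H -> H)
  (x y : tensor H H) : tensor H H :=
  tlift (fun a b => tlift (fun c d => tens (m a c) (m b d)) y) x.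

Record is_bialgebra (k : comPzRingType) (H : lmodType k) (m : H -> H -> H) (u : k -> H)
    (D : H -> tensor H H) (e : H -> k) : Prop := IsBialgebra {
  bialg_m_bilin : bilin m;
  bialg_u_lin : klin u;
  bialg_D_lin : lin D;
  bialg_e_lin : slin e;
  bialg_m_assoc : forall x y z, m (m x y) z = m x (m y z);
  bialg_unit_l : forall c x, m (u c) x = c *: x;
  bialg_unit_r : forall c x, m x (u c) = c *: x;
  bialg_coassoc : forall x, tassoc (tmap D id (D x)) = tmap id D (D x);
  bialg_counit_l : forall x, tlift (fun a b => e a *: b) (D x) = x;
  bialg_counit_r : forall x, tlift (fun a b => e b *: a) (D x) = x;
  bialg_D_mul : forall x y, D (m x y) = tmul m (D x) (D y);
  bialg_D_unit : forall c, D (u c) = tens (u c) (u 1);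
  bialg_e_mul : forall x y, e (m x y) = e x * e y;
  bialg_e_unit : forall c, e (u c) = c }.

Definition ext_RB_op (k : comPzRingType) (R : comAlgType k) (lam kap : k) (P : R -> R) : Prop :=
  lin P /\
  forall x y, P x * P y = P (x * P y) + P (P x * y) + lam *: P (x * y) + kap *: (x * y).

Definition alg_hom (k : comPzRingType) (R S : comAlgType k) (f : R -> S) : Prop :=
  [/\ lin f, forall x y, f (x * y) = f x * f y & f 1 = 1].

Definition free_comm_ext_RB (k : comPzRingType) (lam kap : k) (A F : comAlgType k)
    (P : F -> F) (j : A -> F) : Prop :=
  [/\ ext_RB_op lam kap P, alg_hom j &
    forall (R : comAlgType k) (Q : R -> R) (f : A -> R),
      ext_RB_op lam kap Q -> alg_hom f ->
      exists g : F -> R,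
        [/\ alg_hom g, (forall x, g (P x) = Q (g x)) & (forall a, g (j a) = f a)] /\
        (forall g' : F -> R, alg_hom g' -> (forall x, g' (P x) = Q (g' x)) ->
           (forall a, g' (j a) = f a) -> g' = g)].

(** eps_e : F -> k is an extended RB algebra homomorphism (k carrying the operator
    -mu id) with eps_e o j = eps_A and eps_e o P = -mu eps_e *)
Definition is_counit_e (k : comPzRingType) (mu : k) (A F : comAlgType k)
    (P : F -> F) (j : A -> F) (eA : A -> k) (e : F -> k) : Prop :=
  [/\ slin e, (forall x y, e (x * y) = e x * e y), e 1 = 1,
      (forall a, e (j a) = eA a) & (forall x, e (P x) = - mu * e x)].

Definition Pbar (k : comPzRingType) (mu : k) (F : comAlgType k) (P : F -> F) (e : F -> k) :
  tensor F F -> tensor F F :=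
  tlift (fun a b => tens (P a) (e b *: 1) + mu *: tens a (e b *: 1) + tens a (P b)).

Definition is_comul_e (k : comPzRingType) (mu : k) (A F : comAlgType k)
    (P : F -> F) (j : A -> F) (DA : A -> tensor A A) (e : F -> k) (D : F -> tensor F F) : Prop :=
  [/\ lin D, (forall x y, D (x * y) = tmul (fun a b : F => a * b) (D x) (D y)),
      D 1 = tens 1 1, (forall a, D (j a) = tmap j j (DA a)) &
      (forall x, D (P x) = Pbar mu P e (D x))].

(* Ш_e(A) is generated by j(A) under the algebra operations and P, so two linear maps
   out of it that are multiplicative, intertwine P with the same operator, and agree on 1
   and on j(A) are equal.  The counit laws and coassociativity are equalities of this kind:
   (ε_e ⊗ id) Δ_e and id both intertwine P with itself, while (Δ_e ⊗ id) Δ_e and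
   (id ⊗ Δ_e) Δ_e both intertwine P with the operator obtained by iterating the
   construction of P̄,  a ⊗ t ↦ P a ⊗ u₂ t + μ a ⊗ u₂ t + a ⊗ P̄ t  with
   u₂ = (ε_e ⊗ ε_e)(·) 1 ⊗ 1.  On j(A) both equalities reduce to the bialgebra axioms
   of A. *)

From HB Require Import structures.
From mathcomp Require Import all_boot all_order all_algebra.
From mathcomp Require Import boolp.
Import GRing.Theory.
Local Open Scope ring_scope.
Set Implicit Arguments. Unset Strict Implicit. Unset Printing Implicit Defensive.

Section Multilinear.
Variable k : comPzRingType.
Implicit Types M N W : lmodType k.

Lemma lin0 M N (f : M -> N) : lin f -> f 0 = 0.
Proof. by move=> fL; have := fL (-1) 0 0; rewrite scaler0 addr0 scaleN1r addNr. Qed.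

Lemma linD M N (f : M -> N) : lin f -> forall x y, f (x + y) = f x + f y.
Proof. by move=> fL x y; rewrite -{1}(scale1r x) fL scale1r. Qed.

Lemma linZ M N (f : M -> N) : lin f -> forall c x, f (c *: x) = c *: f x.
Proof. by move=> fL c x; rewrite -[c *: x]addr0 fL lin0 // addr0. Qed.

Lemma lin_id M : lin (@id M). Proof. by []. Qed.

Lemma lin_comp M N W (f : N -> W) (g : M -> N) : lin f -> lin g -> lin (fun x => f (g x)).
Proof. by move=> fL gL c x y; rewrite gL fL. Qed.

Lemma slin_scale M N (e : M -> k) (v : N) : slin e -> lin (fun x => e x *: v).
Proof. by move=> eL c x y; rewrite eL scalerDl scalerA. Qed.

Lemma bilin_linl M N W (f : M -> N -> W) b : bilin f -> lin (f^~ b).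
Proof. by case=> fL _ c x y; rewrite fL. Qed.

Lemma bilin_linr M N W (f : M -> N -> W) a : bilin f -> lin (f a).
Proof. by case=> _ fL c x y; rewrite fL. Qed.

Lemma bilin_comp M N M' N' W (f : M -> N -> W) (g : M' -> M) (h : N' -> N) :
  bilin f -> lin g -> lin h -> bilin (fun a b => f (g a) (h b)).
Proof. by move=> [fL1 fL2] gL hL; split=> *; rewrite ?gL ?hL ?fL1 ?fL2. Qed.

Lemma lin_bilin_comp M N W W' (f : M -> N -> W) (g : W -> W') :
  lin g -> bilin f -> bilin (fun a b => g (f a b)).
Proof. by move=> gL [fL1 fL2]; split=> *; rewrite ?fL1 ?fL2 gL. Qed.

Lemma bilin_add M N W (f g : M -> N -> W) :
  bilin f -> bilin g -> bilin (fun a b => f a b + g a b).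
Proof.
by move=> [fL1 fL2] [gL1 gL2]; split=> *; rewrite ?fL1 ?fL2 ?gL1 ?gL2 scalerDr addrACA.
Qed.

Lemma bilin_scale M N W (f : M -> N -> W) d : bilin f -> bilin (fun a b => d *: f a b).
Proof.
by move=> [fL1 fL2]; split=> *; rewrite ?fL1 ?fL2 scalerDr !scalerA mulrC.
Qed.

Lemma bilin_scalel M N (e : M -> k) : slin e -> bilin (fun a (b : N) => e a *: b).
Proof. by move=> eL; split=> *; rewrite ?eL ?scalerDl ?scalerDr ?scalerA // mulrC. Qed.

Lemma bilin_scaler M N (e : N -> k) : slin e -> bilin (fun (a : M) b => e b *: a).
Proof. by move=> eL; split=> *; rewrite ?eL ?scalerDl ?scalerDr ?scalerA // mulrC. Qed.

Lemma slinZ M (e : M -> k) :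
  slin e -> forall c x, e (c *: x) = c * e x.
Proof.
move=> eL c x; have e0 : e 0 = 0 by have := eL (-1) 0 0; rewrite scaler0 addr0 mulN1r addNr.
by rewrite -[c *: x]addr0 eL e0 addr0.
Qed.

End Multilinear.

Section TensorProduct.
Variable k : comPzRingType.
Implicit Types M N U W : lmodType k.

Lemma tlift_lin M N W (f : M -> N -> W) : bilin f -> lin (tlift f).
Proof.
move=> fB c x y.
change (fsum f (trepr (tpi (trepr (tpi (sscale c (trepr x))) ++ trepr y))) =
   c *: fsum f (trepr x) + fsum f (trepr y)).
by rewrite !fsum_trepr // fsum_cat fsum_trepr // fsum_scale.
Qed.

Lemma tlift_ext M N W (f g : M -> N -> W) : f =2 g -> tlift f =1 tlift g.
Proof. by move=> fg t; apply: eq_bigr => x _; rewrite fg. Qed.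

Lemma tlift_lincomb M N W (f g : M -> N -> W) c t :
  tlift (fun a b => c *: f a b + g a b) t = c *: tlift f t + tlift g t.
Proof.
rewrite /tlift /fsum scaler_sumr -big_split; apply: eq_bigr => x _.
by rewrite scalerDr !scalerA mulrC.
Qed.

Lemma lin_tlift M N W W' (f : M -> N -> W) (g : W -> W') t :
  lin g -> g (tlift f t) = tlift (fun a b => g (f a b)) t.
Proof.
move=> gL; rewrite /tlift /fsum; elim: (trepr t) => [|x s IH]; first by rewrite !big_nil lin0.
by rewrite !big_cons gL IH.
Qed.

Lemma tens_bilin M N : bilin (@tens k M N).
Proof.
split=> c a a' b.
  change (tpi [:: (1, (c *: a + a', b))] =
          tadd (tscale c (tpi [:: (1, (a, b))])) (tpi [:: (1, (a', b))])).
  rewrite /tadd /tscale; tsolve.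
  by rewrite /fsum /sscale /= !big_cons !big_nil !addr0 !scale1r ?mulr1 Hf.1.
change (tpi [:: (1, (a, c *: a' + b))] =
        tadd (tscale c (tpi [:: (1, (a, a'))])) (tpi [:: (1, (a, b))])).
rewrite /tadd /tscale; tsolve.
by rewrite /fsum /sscale /= !big_cons !big_nil !addr0 !scale1r ?mulr1 Hf.2.
Qed.

Lemma tensDl M N (a a' : M) (b : N) : tens (a + a') b = tens a b + tens a' b.
Proof. exact: linD (bilin_linl b (tens_bilin M N)) a a'. Qed.

Lemma tensDr M N (a : M) (b b' : N) : tens a (b + b') = tens a b + tens a b'.
Proof. exact: linD (bilin_linr a (tens_bilin M N)) b b'. Qed.

Lemma tensZl M N c (a : M) (b : N) : tens (c *: a) b = c *: tens a b.
Proof. exact: linZ (bilin_linl b (tens_bilin M N)) c a. Qed.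

Lemma tensZr M N c (a : M) (b : N) : tens a (c *: b) = c *: tens a b.
Proof. exact: linZ (bilin_linr a (tens_bilin M N)) c b. Qed.

Lemma tpi_fsum M N (s : seq (k * (M * N))) : tpi s = fsum (@tens k M N) s.
Proof.
elim: s => [|[c [a b]] s IH]; first by rewrite /fsum big_nil.
rewrite /fsum big_cons -/(fsum _ s) -IH /=.
change (tpi ((c, (a, b)) :: s) = tadd (tscale c (tpi [:: (1, (a, b))])) (tpi s)).
by rewrite /tadd /tscale; tsolve; rewrite /fsum /sscale /= !big_cons !big_nil !addr0 scale1r.
Qed.

Lemma tensor_lin_ext M N W (f g : tensor M N -> W) :
  lin f -> lin g -> (forall a b, f (tens a b) = g (tens a b)) -> f =1 g.
Proof.
move=> fL gL fg t; rewrite -(treprK t) tpi_fsum /fsum.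
elim: (trepr t) => [|x s IH]; first by rewrite big_nil !lin0.
by rewrite big_cons !fL fg IH.
Qed.

Lemma tensor_bilin_ext M N M' N' W (f g : tensor M N -> tensor M' N' -> W) :
  bilin f -> bilin g ->
  (forall a b c d, f (tens a b) (tens c d) = g (tens a b) (tens c d)) -> f =2 g.
Proof.
move=> fB gB fg X Y; move: X; apply: tensor_lin_ext; try exact: bilin_linl.
by move=> a b; move: Y; apply: tensor_lin_ext; try exact: bilin_linr.
Qed.

Lemma tensor3_lin_ext M N U W (f g : tensor (tensor M N) U -> W) :
  lin f -> lin g -> (forall a b c, f (tens (tens a b) c) = g (tens (tens a b) c)) -> f =1 g.
Proof.
move=> fL gL fg; apply: tensor_lin_ext => // X c; move: X; apply: tensor_lin_ext => //.
- exact: lin_comp fL (bilin_linl c (tens_bilin _ _)).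
- exact: lin_comp gL (bilin_linl c (tens_bilin _ _)).
Qed.

Lemma tmap_bilin M N M' N' (f : M -> M') (g : N -> N') :
  lin f -> lin g -> bilin (fun a b => tens (f a) (g b)).
Proof. by move=> fL gL; apply: bilin_comp => //; exact: tens_bilin. Qed.

Lemma tmap_lin M N M' N' (f : M -> M') (g : N -> N') : lin f -> lin g -> lin (tmap f g).
Proof. by move=> fL gL; apply: tlift_lin; exact: tmap_bilin. Qed.

Lemma tmap_tens M N M' N' (f : M -> M') (g : N -> N') a b :
  lin f -> lin g -> tmap f g (tens a b) = tens (f a) (g b).
Proof. by move=> fL gL; rewrite /tmap tlift_tens //; exact: tmap_bilin. Qed.

Lemma tlift_tmap M N M' N' W (f : M' -> N' -> W) (g : M -> M') (h : N -> N') t :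
  bilin f -> lin g -> lin h -> tlift f (tmap g h t) = tlift (fun a b => f (g a) (h b)) t.
Proof.
move=> fB gL hL; move: t; apply: tensor_lin_ext.
- exact: lin_comp (tlift_lin fB) (tmap_lin gL hL).
- by apply: tlift_lin; exact: bilin_comp.
by move=> a b; rewrite tmap_tens // !tlift_tens //; exact: bilin_comp.
Qed.

Lemma tmap_comp M N M' N' M'' N'' (f : M' -> M'') (g : N' -> N'') (f' : M -> M') (g' : N -> N') t :
  lin f -> lin g -> lin f' -> lin g' ->
  tmap f g (tmap f' g' t) = tmap (fun a => f (f' a)) (fun b => g (g' b)) t.
Proof. by move=> fL gL f'L g'L; rewrite /tmap tlift_tmap //; exact: tmap_bilin. Qed.

Lemma tmap_ext M N M' N' (f f' : M -> M') (g g' : N -> N') :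
  f =1 f' -> g =1 g' -> tmap f g =1 tmap f' g'.
Proof. by move=> ff' gg'; apply: tlift_ext => a b; rewrite ff' gg'. Qed.

Lemma tassoc_bilin M N U :
  bilin (fun (x : tensor M N) (c : U) => tlift (fun a b => tens a (tens b c)) x).
Proof.
have inner (c : U) : bilin (M := M) (N := N) (fun a b => tens a (tens b c)).
  exact: bilin_comp (tens_bilin _ _) (@lin_id _ _) (bilin_linl c (tens_bilin _ _)).
split=> [c x x' y|c x y y']; first by rewrite tlift_lin.
rewrite -tlift_lincomb; apply: tlift_ext => a b.
by rewrite !(tensDr, tensZr).
Qed.

Lemma tassoc_lin M N U : lin (@tassoc k M N U).
Proof. exact: tlift_lin (tassoc_bilin M N U). Qed.

Lemma tassoc_tens M N U (a : M) (b : N) (c : U) :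
  tassoc (tens (tens a b) c) = tens a (tens b c).
Proof.
rewrite /tassoc tlift_tens; last exact: tassoc_bilin.
rewrite tlift_tens //.
exact: bilin_comp (tens_bilin _ _) (@lin_id _ _) (bilin_linl c (tens_bilin _ _)).
Qed.

Lemma tassoc_tmap M N U M' N' U'
    (f : M -> M') (g : N -> N') (h : U -> U') :
  lin f -> lin g -> lin h -> forall t, tassoc (tmap (tmap f g) h t) = tmap f (tmap g h) (tassoc t).
Proof.
move=> fL gL hL; apply: tensor3_lin_ext.
- exact: lin_comp (@tassoc_lin _ _ _) (tmap_lin (tmap_lin fL gL) hL).
- exact: lin_comp (tmap_lin fL (tmap_lin gL hL)) (@tassoc_lin _ _ _).
by move=> a b c; rewrite !tmap_tens ?tassoc_tens ?tmap_tens //; exact: tmap_lin.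
Qed.

Definition tmulg M N (mM : M -> M -> M) (mN : N -> N -> N) (X Y : tensor M N) : tensor M N :=
  tlift (fun a b => tmap (mM a) (mN b) Y) X.

Lemma tmap_mul_bilin M N (mM : M -> M -> M) (mN : N -> N -> N) Y :
  bilin mM -> bilin mN -> bilin (fun a b => tmap (mM a) (mN b) Y).
Proof.
move=> [mM1 _] [mN1 _]; split=> c a a' b; rewrite -tlift_lincomb; apply: tlift_ext => a2 b2.
  by rewrite mM1 tensDl tensZl.
by rewrite mN1 tensDr tensZr.
Qed.

Lemma tmulg_bilin M N (mM : M -> M -> M) (mN : N -> N -> N) :
  bilin mM -> bilin mN -> bilin (tmulg mM mN).
Proof.
move=> mMB mNB; split=> c X X' Y; first by rewrite /tmulg tlift_lin //; exact: tmap_mul_bilin.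
rewrite /tmulg -tlift_lincomb; apply: tlift_ext => a b.
by apply: tmap_lin; exact: bilin_linr.
Qed.

Lemma tmulg_tens M N (mM : M -> M -> M) (mN : N -> N -> N) a b c d :
  bilin mM -> bilin mN -> tmulg mM mN (tens a b) (tens c d) = tens (mM a c) (mN b d).
Proof.
move=> mMB mNB; rewrite /tmulg tlift_tens; last exact: tmap_mul_bilin.
by rewrite tmap_tens //; exact: bilin_linr.
Qed.

Lemma tlift_tmulg M N W (mM : M -> M -> M) (mN : N -> N -> N) (mW : W -> W -> W)
    (f : M -> N -> W) :
  bilin mM -> bilin mN -> bilin mW -> bilin f ->
  (forall a b c d, f (mM a c) (mN b d) = mW (f a b) (f c d)) ->
  forall X Y, tlift f (tmulg mM mN X Y) = mW (tlift f X) (tlift f Y).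
Proof.
move=> mMB mNB mWB fB fM; apply: tensor_bilin_ext.
- exact: lin_bilin_comp (tlift_lin fB) (tmulg_bilin mMB mNB).
- exact: bilin_comp mWB (tlift_lin fB) (tlift_lin fB).
by move=> a b c d; rewrite tmulg_tens // !tlift_tens.
Qed.

Lemma tmap_tmulg M N M' N' (mM : M -> M -> M) (mN : N -> N -> N)
    (mM' : M' -> M' -> M') (mN' : N' -> N' -> N') (f : M -> M') (g : N -> N') :
  bilin mM -> bilin mN -> bilin mM' -> bilin mN' -> lin f -> lin g ->
  (forall a c, f (mM a c) = mM' (f a) (f c)) -> (forall b d, g (mN b d) = mN' (g b) (g d)) ->
  forall X Y, tmap f g (tmulg mM mN X Y) = tmulg mM' mN' (tmap f g X) (tmap f g Y).
Proof.
move=> mMB mNB mM'B mN'B fL gL fM gM; apply: tlift_tmulg => //.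
- exact: tmulg_bilin.
- exact: tmap_bilin.
by move=> a b c d; rewrite fM gM tmulg_tens.
Qed.

Lemma tassoc_tmulg M N U (m1 : M -> M -> M) (m2 : N -> N -> N) (m3 : U -> U -> U) :
  bilin m1 -> bilin m2 -> bilin m3 -> forall X Y,
  tassoc (tmulg (tmulg m1 m2) m3 X Y) = tmulg m1 (tmulg m2 m3) (tassoc X) (tassoc Y).
Proof.
move=> m1B m2B m3B; have m12B := tmulg_bilin m1B m2B; have m23B := tmulg_bilin m2B m3B.
have tassoc_tensl (c : U) : lin (fun Z : tensor M N => tassoc (tens Z c)).
  exact: lin_comp (@tassoc_lin _ _ _) (bilin_linl c (tens_bilin _ _)).
apply: tensor_bilin_ext.
- exact: lin_bilin_comp (@tassoc_lin _ _ _) (tmulg_bilin m12B m3B).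
- exact: bilin_comp (tmulg_bilin m1B m23B) (@tassoc_lin _ _ _) (@tassoc_lin _ _ _).
move=> X b Y d; rewrite tmulg_tens //; move: X Y; apply: tensor_bilin_ext.
- exact: lin_bilin_comp (tassoc_tensl _) m12B.
- exact: bilin_comp (tmulg_bilin m1B m23B) (tassoc_tensl _) (tassoc_tensl _).
by move=> a1 a2 c1 c2; rewrite tmulg_tens // !tassoc_tens !tmulg_tens.
Qed.

Section Pbar.
Variable mu : k.

(* The paper's P̄ is [pbar P P (fun b => e b *: 1)]. *)
Definition pbar M N (PM : M -> M) (PN : N -> N) (uN : N -> N) : tensor M N -> tensor M N :=
  tlift (fun a b => tens (PM a) (uN b) + mu *: tens a (uN b) + tens a (PN b)).

Section PbarLinear.
Variables (M N : lmodType k) (PM : M -> M) (PN uN : N -> N).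
Hypotheses (PML : lin PM) (PNL : lin PN) (uNL : lin uN).

Lemma pbar_bilin : bilin (fun a b => tens (PM a) (uN b) + mu *: tens a (uN b) + tens a (PN b)).
Proof.
have tB := tens_bilin M N.
apply: bilin_add; first apply: bilin_add.
- exact: bilin_comp tB PML uNL.
- exact: bilin_scale (bilin_comp tB (@lin_id _ _) uNL).
- exact: bilin_comp tB (@lin_id _ _) PNL.
Qed.

Lemma pbar_lin : lin (pbar PM PN uN).
Proof. exact: tlift_lin pbar_bilin. Qed.

Lemma pbar_tens a b :
  pbar PM PN uN (tens a b) = tens (PM a) (uN b) + mu *: tens a (uN b) + tens a (PN b).
Proof. exact: tlift_tens pbar_bilin. Qed.

End PbarLinear.

Lemma tmap_pbar M N M' N' (f : M -> M') (g : N -> N')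
    (PM : M -> M) (PN uN : N -> N) (PM' : M' -> M') (PN' uN' : N' -> N') :
  lin f -> lin g -> lin PM -> lin PN -> lin uN -> lin PM' -> lin PN' -> lin uN' ->
  (forall a, f (PM a) = PM' (f a)) -> (forall b, g (PN b) = PN' (g b)) ->
  (forall b, g (uN b) = uN' (g b)) ->
  forall t, tmap f g (pbar PM PN uN t) = pbar PM' PN' uN' (tmap f g t).
Proof.
move=> fL gL PML PNL uNL PM'L PN'L uN'L fP gP gu; apply: tensor_lin_ext.
- exact: lin_comp (tmap_lin fL gL) (pbar_lin PML PNL uNL).
- exact: lin_comp (pbar_lin PM'L PN'L uN'L) (tmap_lin fL gL).
move=> a b; rewrite pbar_tens // !(linD (tmap_lin fL gL)) (linZ (tmap_lin fL gL)).
by rewrite !tmap_tens // pbar_tens // fP gP gu.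
Qed.

Lemma tassoc_pbar M N U (PM : M -> M) (PN uN : N -> N) (PU uU : U -> U) :
  lin PM -> lin PN -> lin uN -> lin PU -> lin uU -> forall t,
  tassoc (pbar (pbar PM PN uN) PU uU t) = pbar PM (pbar PN PU uU) (tmap uN uU) (tassoc t).
Proof.
move=> PML PNL uNL PUL uUL; have TA := @tassoc_lin M N U.
have innerL := pbar_lin PML PNL uNL.
have outerL := pbar_lin PNL PUL uUL; have uNUL := tmap_lin uNL uUL.
apply: tensor3_lin_ext.
- exact: lin_comp TA (pbar_lin innerL PUL uUL).
- exact: lin_comp (pbar_lin PML outerL uNUL) TA.
move=> a b c; rewrite !pbar_tens // tassoc_tens pbar_tens // tmap_tens // pbar_tens //.
rewrite !tensDl !tensZl !(linD TA) !(linZ TA) !tassoc_tens !tensDr !tensZr.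
by rewrite !addrA (addrAC _ (mu *: _) (tens a (tens (PN b) _))).
Qed.

End Pbar.

End TensorProduct.

Definition mulop_morph (k : comPzRingType) (M N : lmodType k)
    (mM : M -> M -> M) (PM : M -> M) (mN : N -> N -> N) (PN : N -> N) (f : M -> N) :=
  [/\ lin f, forall x y, f (mM x y) = mN (f x) (f y) & forall x, f (PM x) = PN (f x)].

Lemma mulop_morph_id (k : comPzRingType) (M : lmodType k) (mM : M -> M -> M) (PM : M -> M) :
  mulop_morph mM PM mM PM id.
Proof. by []. Qed.

Lemma mulop_morph_comp (k : comPzRingType) (M N W : lmodType k)
    (mM : M -> M -> M) (PM : M -> M) (mN : N -> N -> N) (PN : N -> N)
    (mW : W -> W -> W) (PW : W -> W) (f : M -> N) (g : N -> W) :
  mulop_morph mM PM mN PN f -> mulop_morph mN PN mW PW g ->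
  mulop_morph mM PM mW PW (fun x => g (f x)).
Proof.
move=> [fL fM fP] [gL gM gP]; split=> [|x y|x]; first exact: lin_comp.
  by rewrite fM gM.
by rewrite fP gP.
Qed.

Section FreeExtRotaBaxter.
Variables (k : comPzRingType) (lam kap : k) (A F : comAlgType k) (P : F -> F) (j : A -> F).
Hypothesis Fj_free : free_comm_ext_RB lam kap P j.

Section Induction.
Variable S : F -> Prop.
Hypotheses (S1 : S 1) (S_lincomb : forall c x y, S x -> S y -> S (c *: x + y)).
Hypotheses (SM : forall x y, S x -> S y -> S (x * y)) (SP : forall x, S x -> S (P x)).
Hypothesis Sj : forall a, S (j a).

Definition S_pred : {pred F} := fun x => `[< S x >].
Record S_sub := SSub { S_val : F; S_valP : S_pred S_val }.
HB.instance Definition _ := [isSub for S_val].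
HB.instance Definition _ := [Choice of S_sub by <:].

Lemma S_subalg_closed : GRing.subsemialg_closed S_pred.
Proof.
have S0 : S 0 by have := S_lincomb (-1) S1 S1; rewrite scaleN1r addNr.
split; rewrite /S_pred.
- exact/asboolP.
- split=> [|x y /asboolP Sx /asboolP Sy]; apply/asboolP; first exact: S0.
  by have := S_lincomb 1 Sx Sy; rewrite scale1r.
- by move=> c x /asboolP Sx; apply/asboolP; have := S_lincomb c Sx S0; rewrite addr0.
- by move=> x y /asboolP Sx /asboolP Sy; apply/asboolP; exact: SM.
Qed.

HB.instance Definition _ :=
  GRing.SubChoice_isSubAlgebra.Build k F S_pred S_sub S_subalg_closed.
HB.instance Definition _ := GRing.SubNzRing_isSubComNzRing.Build F S_pred S_sub.

(* The universal map into [S_sub] followed by [S_val] is the identity, by uniqueness. *)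
Lemma free_comm_ext_RB_ind x : S x.
Proof.
case: Fj_free => [[PL PRB] [jL jM j1] univ].
have S_pred_P (y : S_sub) : S_pred (P (S_val y)).
  by apply/asboolP; apply: SP; apply/asboolP; exact: S_valP.
have S_pred_j a : S_pred (j a) by exact/asboolP.
pose PS y := SSub (S_pred_P y); pose jS a := SSub (S_pred_j a).
have PS_RB : ext_RB_op lam kap PS.
  by split=> [c y z|y z]; apply: val_inj; rewrite /= ?PL ?PRB.
have jS_hom : alg_hom jS by split=> [c y z|y z|]; apply: val_inj; rewrite /= ?jL ?jM ?j1.
have [g [[[gL gM g1] gP gj] _]] := univ _ PS jS PS_RB jS_hom.
have [h [_ h_uniq]] := univ _ P j (conj PL PRB) (And3 jL jM j1).
have S_val_g : (fun y => S_val (g y)) = id.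
  have -> : id = h by apply: h_uniq.
  apply: h_uniq => [|y|a]; rewrite ?gP ?gj //.
  by split=> [c y z|y z|]; rewrite ?gL ?gM ?g1.
rewrite -[x]/(id x) -S_val_g.
exact/asboolP/S_valP.
Qed.

End Induction.

Lemma free_comm_ext_RB_morph_eq (M : lmodType k) (mM : M -> M -> M) (Q : M -> M) (f g : F -> M) :
  mulop_morph *%R P mM Q f -> mulop_morph *%R P mM Q g ->
  f 1 = g 1 -> (forall a, f (j a) = g (j a)) -> f =1 g.
Proof.
move=> [fL fM fP] [gL gM gP] fg1 fgj; apply: free_comm_ext_RB_ind => //.
- by move=> c x y fgx fgy; rewrite fL gL fgx fgy.
- by move=> x y fgx fgy; rewrite fM gM fgx fgy.
- by move=> x fgx; rewrite fP gP fgx.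
Qed.

End FreeExtRotaBaxter.

Lemma mulr_bilin (k : comPzRingType) (R : comAlgType k) : bilin ( *%R : R -> R -> R).
Proof. by split=> *; rewrite ?mulrDl ?mulrDr -?scalerAl -?scalerAr. Qed.

Section ExtendedShuffleBialgebra.
Variables (k : comPzRingType) (lam kap mu : k).
Variables (A : comAlgType k) (DA : A -> tensor A A) (eA : A -> k).
Variables (F : comAlgType k) (P : F -> F) (j : A -> F) (e : F -> k) (D : F -> tensor F F).
Hypothesis A_bialg : is_bialgebra *%R (fun c : k => c%:A) DA eA.
Hypothesis Fj_free : free_comm_ext_RB lam kap P j.
Hypothesis e_counit : is_counit_e mu P j eA e.
Hypothesis D_comul : is_comul_e mu P j DA e D.

Definition unit_counit (x : F) : F := e x *: 1.

Let PL : lin P. Proof. by case: Fj_free => [[]]. Qed.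
Let jL : lin j. Proof. by case: Fj_free => _ []. Qed.
Let eL : slin e. Proof. by case: e_counit. Qed.
Let eM x y : e (x * y) = e x * e y. Proof. by case: e_counit => _ ->. Qed.
Let e1 : e 1 = 1. Proof. by case: e_counit. Qed.
Let ej a : e (j a) = eA a. Proof. by case: e_counit. Qed.
Let eP x : e (P x) = - mu * e x. Proof. by case: e_counit. Qed.
Let DL : lin D. Proof. by case: D_comul. Qed.
Let D1 : D 1 = tens 1 1. Proof. by case: D_comul. Qed.
Let Dj a : D (j a) = tmap j j (DA a). Proof. by case: D_comul. Qed.
Let DAL : lin DA := bialg_D_lin A_bialg.
Let mulFB := mulr_bilin F.
Let unit_counitL : lin unit_counit. Proof. exact: slin_scale eL. Qed.

Local Notation Pbar_e := (pbar mu P P unit_counit).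
Local Notation Pbar_e2 := (pbar mu P Pbar_e (tmap unit_counit unit_counit)).
Local Notation mul2 := (tmulg *%R *%R).
Local Notation mul3 := (tmulg *%R mul2).

Let Pbar_eL : lin Pbar_e. Proof. exact: pbar_lin. Qed.

Lemma D_morph : mulop_morph *%R P mul2 Pbar_e D.
Proof. by case: D_comul. Qed.

Lemma counit_l_morph : mulop_morph mul2 Pbar_e *%R P
  (tlift (fun a b => e a *: b)).
Proof.
have eB : bilin (fun a b : F => e a *: b) by exact: bilin_scalel. have eTL := tlift_lin eB.
split=> //; first apply: tlift_tmulg => // a b c d.
  by rewrite eM -scalerAl -scalerAr scalerA.
apply: tensor_lin_ext; [exact: lin_comp eTL Pbar_eL | exact: lin_comp PL eTL |].
move=> a b; rewrite pbar_tens // !(linD eTL) (linZ eTL) !tlift_tens //.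
by rewrite /unit_counit eP (linZ PL) !scalerA !mulNr scaleNr addNr add0r.
Qed.

Lemma counit_r_morph : mulop_morph mul2 Pbar_e *%R P
  (tlift (fun a b => e b *: a)).
Proof.
have eB : bilin (fun a b : F => e b *: a) by exact: bilin_scaler. have eTL := tlift_lin eB.
split=> //; first apply: tlift_tmulg => // a b c d.
  by rewrite eM -scalerAl -scalerAr scalerA mulrC.
apply: tensor_lin_ext; [exact: lin_comp eTL Pbar_eL | exact: lin_comp PL eTL |].
move=> a b; rewrite pbar_tens // !(linD eTL) (linZ eTL) !tlift_tens //.
by rewrite /unit_counit eP (linZ PL) (slinZ eL) e1 mulr1 scalerA mulNr scaleNr addrK.
Qed.

Lemma counit_l x : tlift (fun a b => e a *: b) (D x) = x.
Proof.
apply: (free_comm_ext_RB_morph_eq Fj_free (mulop_morph_comp D_morph counit_l_morph)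
  (mulop_morph_id _ _)).
  by rewrite D1 tlift_tens ?e1 ?scale1r //; exact: bilin_scalel.
move=> a; rewrite Dj tlift_tmap //; last exact: bilin_scalel.
rewrite -[in RHS](bialg_counit_l A_bialg a) (lin_tlift _ _ jL); apply: tlift_ext => b c.
by rewrite ej (linZ jL).
Qed.

Lemma counit_r x : tlift (fun a b => e b *: a) (D x) = x.
Proof.
apply: (free_comm_ext_RB_morph_eq Fj_free (mulop_morph_comp D_morph counit_r_morph)
  (mulop_morph_id _ _)).
  by rewrite D1 tlift_tens ?e1 ?scale1r //; exact: bilin_scaler.
move=> a; rewrite Dj tlift_tmap //; last exact: bilin_scaler.
rewrite -[in RHS](bialg_counit_r A_bialg a) (lin_tlift _ _ jL); apply: tlift_ext => b c.
by rewrite ej (linZ jL).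
Qed.

Lemma D_unit_counit x : D (unit_counit x) = tmap unit_counit unit_counit (D x).
Proof.
have eB : bilin (fun a b : F => e a *: b) by exact: bilin_scalel.
have tmap_unit_counit X :
    tmap unit_counit unit_counit X = e (tlift (fun a b => e a *: b) X) *: tens 1 1.
  move: X; apply: tensor_lin_ext; first exact: tmap_lin.
    exact: lin_comp (slin_scale _ eL) (tlift_lin eB).
  move=> a b; rewrite tmap_tens // tlift_tens // (slinZ eL) tensZl tensZr scalerA.
  by rewrite (mulrC (e a)).
by rewrite tmap_unit_counit counit_l (linZ DL) D1.
Qed.

Definition comul_id (X : tensor F F) := tassoc (tmap D id X).
Definition id_comul (X : tensor F F) := tmap id D X.

Lemma comul_id_morph : mulop_morph mul2 Pbar_e mul3 Pbar_e2 comul_id.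
Proof.
have [_ DM DP] := D_morph; have DidL := tmap_lin DL (@lin_id _ F).
split=> [|X Y|X]; rewrite /comul_id.
- exact: lin_comp (@tassoc_lin _ _ _ _) DidL.
- by rewrite (tmap_tmulg mulFB mulFB (tmulg_bilin mulFB mulFB) mulFB) ?tassoc_tmulg.
by rewrite (tmap_pbar mu DL (@lin_id _ F) PL PL unit_counitL Pbar_eL PL unit_counitL DP)
  ?tassoc_pbar.
Qed.

Lemma id_comul_morph : mulop_morph mul2 Pbar_e mul3 Pbar_e2 id_comul.
Proof.
have [_ DM DP] := D_morph.
split=> [|X Y|X]; rewrite /id_comul; first exact: tmap_lin.
  by rewrite (tmap_tmulg mulFB mulFB mulFB (tmulg_bilin mulFB mulFB)).
have uuL := tmap_lin unit_counitL unit_counitL.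
by rewrite (tmap_pbar mu (@lin_id _ F) DL PL PL unit_counitL PL Pbar_eL uuL) // => b;
  rewrite D_unit_counit.
Qed.

Lemma coassoc x : tassoc (tmap D id (D x)) = tmap id D (D x).
Proof.
apply: (free_comm_ext_RB_morph_eq Fj_free (mulop_morph_comp D_morph comul_id_morph)
  (mulop_morph_comp D_morph id_comul_morph)).
  by rewrite /comul_id /id_comul D1 !tmap_tens ?D1 ?tassoc_tens.
move=> a; rewrite /comul_id /id_comul Dj.
have tmap_jj_lin := tmap_lin jL jL.
rewrite !tmap_comp // (tmap_ext (frefl j) Dj) (tmap_ext Dj (frefl j)).
by rewrite -!tmap_comp // tassoc_tmap // (bialg_coassoc A_bialg).
Qed.

End ExtendedShuffleBialgebra.

Unset Implicit Arguments.

Theorem theorem4p7 (k : comPzRingType) (lam kap mu : k)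
    (A : comAlgType k) (DA : A -> tensor A A) (eA : A -> k)
    (F : comAlgType k) (P : F -> F) (j : A -> F)
    (e : F -> k) (D : F -> tensor F F) :
  mu ^+ 2 - lam * mu + kap = 0 ->
  is_bialgebra (fun x y : A => x * y) (fun c : k => c%:A) DA eA ->
  free_comm_ext_RB lam kap P j ->
  is_counit_e mu P j eA e ->
  is_comul_e mu P j DA e D ->
  is_bialgebra (fun x y : F => x * y) (fun c : k => c%:A) D e.
Proof.
(* The condition on mu is what makes e and D exist; here they are given. *)
move=> _ A_bialg Fj_free e_counit D_comul.
have [eL eM e1 _ _] := e_counit; have [DL DM D1 _ _] := D_comul.
constructor=> //.
- exact: mulr_bilin.
- by move=> c x y; rewrite scalerDl scalerA.
- by move=> x y z; rewrite mulrA.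
- by move=> c x; rewrite mulr_algl.
- by move=> c x; rewrite mulr_algr.
- exact: coassoc A_bialg Fj_free e_counit D_comul.
- exact: counit_l A_bialg Fj_free e_counit D_comul.
- exact: counit_r A_bialg Fj_free e_counit D_comul.
- by move=> c; rewrite (linZ DL) D1 tensZl scale1r.
- by move=> c; rewrite (slinZ eL) e1 mulr1.
Qed.
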